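(* Let $\lambda>0$, let $\gamma\ge0$, and let $Z_s\in\mathbb{R}^{1\times(n+m)}$ be row vectors with $\|Z_s\|_2\le1+\gamma$. Let $\Theta^*_s\in\mathbb{R}^{(n+m)\times n}$ satisfy $\sum_{s=1}^{H-1}\|\Theta^*_{s+1}-\Theta^*_s\|_F\le\mathcal{B}_H$. Let $h_0\le h$ lie in the same restart epoch of size $L$ (so $h-h_0\le L$). Then for any $h\in[H]$, \[ \Big\|\Big(\sum_{s=h_0}^{h-1}Z_s^\top Z_s+\lambda I\Big)^{-1}\Big(\sum_{s=h_0}^{h-1}Z_s^\top Z_s(\Theta^*_s-\Theta^*_h)\Big)\Big\|_F\le(1+\gamma)\sqrt{\tfrac{L(m+n)}{\lambda}}\,\mathcal{B}_H. \]
   Context: In the paper, $Z_s=[x_s^\top,u_s^\top]$ for the states and controls of a time-varying linear system $x_{s+1}=A_sx_s+B_su_s+w_s$ with $\Theta^*_s=[A_s,B_s]^\top$, the bound $\|Z_s\|_2\le1+\gamma$ holds with $\gamma$ a bound on the control norms $\|u_s\|_2$ (states having norm at most $1$), and $h_0$ is the start of the current epoch of the restarting strategy with epoch length $L$. *)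

From mathcomp Require Import all_boot all_order all_algebra.
From mathcomp Require Import reals.
Set Implicit Arguments. Unset Strict Implicit. Unset Printing Implicit Defensive.
Import Order.TTheory GRing.Theory Num.Theory.
Local Open Scope ring_scope.

Definition frob (R : realType) (p q : nat) (A : 'M[R]_(p, q)) : R :=
  Num.sqrt (\sum_(i < p) \sum_(j < q) (A i j) ^+ 2).

From mathcomp Require Import all_boot all_order all_algebra.
From mathcomp Require Import reals ring lra.
Import Order.TTheory GRing.Theory Num.Theory.
Set Implicit Arguments. Unset Strict Implicit. Unset Printing Implicit Defensive.
Local Open Scope ring_scope.

(* Write V = sum_s Z_s^T Z_s + lambda I and W = V^-1.  Since W is symmetric,
   the matrix to bound is sum_s (Z_s W)^T (Z_s (Theta_s - Theta_h)), so
   Cauchy-Schwarz bounds its squared Frobenius norm by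
   (sum_s |Z_s W|^2) (sum_s |Z_s (Theta_s - Theta_h)|^2).  The first factor is
   at most (n + m) / lambda: lambda |Z_s W|^2 <= Z_s W Z_s^T, and these sum to
   tr ((V - lambda I) W) = n + m - lambda tr W.  In the second factor each of
   the at most L terms is at most ((1 + gamma) B_H)^2, because Theta_s - Theta_h
   telescopes into part of the total variation. *)

Lemma cauchy_schwarz_sum (R : realDomainType) (I : Type) (r : seq I) (a b : I -> R) :
  (\sum_(i <- r) a i * b i) ^+ 2 <=
  (\sum_(i <- r) a i ^+ 2) * (\sum_(i <- r) b i ^+ 2).
Proof.
set P := \sum_(i <- r) \sum_(j <- r) a i ^+ 2 * b j ^+ 2.
set Q := \sum_(i <- r) \sum_(j <- r) (a i * b i) * (a j * b j).
have eP : (\sum_(i <- r) a i ^+ 2) * (\sum_(i <- r) b i ^+ 2) = P.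
  by rewrite mulr_suml; apply: eq_bigr => i _; rewrite mulr_sumr.
have eQ : (\sum_(i <- r) a i * b i) ^+ 2 = Q.
  by rewrite expr2 mulr_suml; apply: eq_bigr => i _; rewrite mulr_sumr.
have lagrange : \sum_(i <- r) \sum_(j <- r) (a i * b j - a j * b i) ^+ 2
    = P + P - 2 * Q.
  have P_swap : \sum_(i <- r) \sum_(j <- r) a j ^+ 2 * b i ^+ 2 = P.
    by rewrite /P exchange_big.
  rewrite -{2}P_swap /P /Q mulr_sumr -!big_split /= -sumrB.
  apply: eq_bigr => i _; rewrite mulr_sumr -!big_split /= -sumrB.
  by apply: eq_bigr => j _; ring.
have : 0 <= P + P - 2 * Q.
  by rewrite -lagrange; do 2!(apply: sumr_ge0 => ? _); exact: sqr_ge0.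
rewrite eP eQ; lra.
Qed.

Lemma ler_sum_nat_subinterval (R : numDomainType) (F : nat -> R) a b c d :
  (forall k, 0 <= F k) -> (c <= a)%N -> (a <= b)%N -> (b <= d)%N ->
  \sum_(a <= k < b) F k <= \sum_(c <= k < d) F k.
Proof.
move=> F_ge0 ca ab bd.
rewrite (big_cat_nat ca (leq_trans ab bd)) (big_cat_nat ab bd) /=.
rewrite addrCA lerDl addr_ge0 //; exact: sumr_ge0.
Qed.

Section Frobenius.
Variable R : realType.

Lemma frob_ge0 p q (A : 'M[R]_(p, q)) : 0 <= frob A.
Proof. exact: sqrtr_ge0. Qed.

Lemma sqr_frob p q (A : 'M[R]_(p, q)) :
  frob A ^+ 2 = \sum_(i < p) \sum_(j < q) A i j ^+ 2.
Proof. by rewrite sqr_sqrtr //; do 2!(apply: sumr_ge0 => ? _); exact: sqr_ge0. Qed.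

Lemma sqr_frob_row q (x : 'rV[R]_q) : frob x ^+ 2 = \sum_(j < q) x 0 j ^+ 2.
Proof. by rewrite sqr_frob big_ord1. Qed.

Lemma mulmx_trmx_row q (x : 'rV[R]_q) : (x *m x^T) 0 0 = frob x ^+ 2.
Proof. by rewrite sqr_frob_row mxE; apply: eq_bigr => j _; rewrite mxE expr2. Qed.

Lemma frob_le_of_sqr_le p q (A : 'M[R]_(p, q)) c :
  0 <= c -> frob A ^+ 2 <= c ^+ 2 -> frob A <= c.
Proof. by move=> c_ge0; rewrite ler_sqr // ?nnegrE ?frob_ge0. Qed.

Lemma frob_eq0 p q (A : 'M[R]_(p, q)) : (frob A == 0) = (A == 0).
Proof.
apply/idP/eqP => [|->]; last first.
  by rewrite /frob big1 ?sqrtr0 // => i _; rewrite big1 // => j _; rewrite mxE expr0n.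
have sqr_entry_ge0 (i : 'I_p) (j : 'I_q) : 0 <= A i j ^+ 2 by exact: sqr_ge0.
rewrite -sqrf_eq0 sqr_frob => /eqP rows0; apply/matrixP => i j; apply/eqP.
have row0 : \sum_(k < q) A i k ^+ 2 = 0.
  exact: psumr_eq0P (fun i _ => sumr_ge0 _ (fun j _ => sqr_entry_ge0 i j)) rows0 i isT.
by rewrite mxE -sqrf_eq0 (psumr_eq0P (fun k _ => sqr_entry_ge0 i k) row0).
Qed.

Lemma frob0 p q : frob (0 : 'M[R]_(p, q)) = 0.
Proof. by apply/eqP; rewrite frob_eq0. Qed.

Lemma frobN p q (A : 'M[R]_(p, q)) : frob (- A) = frob A.
Proof. by congr Num.sqrt; do 2!(apply: eq_bigr => ? _); rewrite mxE sqrrN. Qed.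

Lemma frobD p q (A B : 'M[R]_(p, q)) : frob (A + B) <= frob A + frob B.
Proof.
set ip := \sum_(i < p) \sum_(j < q) A i j * B i j.
have sqr_frobD : frob (A + B) ^+ 2 = frob A ^+ 2 + frob B ^+ 2 + 2 * ip.
  rewrite !sqr_frob /ip mulr_sumr -!big_split /=; apply: eq_bigr => i _.
  rewrite mulr_sumr -!big_split /=; apply: eq_bigr => j _; rewrite mxE; ring.
have ip_le : ip <= frob A * frob B.
  have : ip ^+ 2 <= (frob A * frob B) ^+ 2.
    by rewrite exprMn !sqr_frob /ip !pair_bigA; exact: cauchy_schwarz_sum.
  have := mulr_ge0 (frob_ge0 A) (frob_ge0 B); nra.
apply: frob_le_of_sqr_le; first by rewrite addr_ge0 ?frob_ge0.
rewrite sqr_frobD sqrrD; lra.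
Qed.

Lemma frobM p q k (A : 'M[R]_(p, q)) (B : 'M[R]_(q, k)) :
  frob (A *m B) <= frob A * frob B.
Proof.
apply: frob_le_of_sqr_le; first by rewrite mulr_ge0 ?frob_ge0.
rewrite exprMn !sqr_frob mulr_suml; apply: ler_sum => i _.
rewrite [X in _ * X]exchange_big mulr_sumr; apply: ler_sum => j _.
rewrite mxE; exact: (cauchy_schwarz_sum _ (fun l => A i l) (fun l => B l j)).
Qed.

Lemma frob_sum_trmx_mul I (r : seq I) p q (x : I -> 'rV[R]_p) (y : I -> 'rV[R]_q) :
  frob (\sum_(s <- r) (x s)^T *m y s) ^+ 2 <=
  (\sum_(s <- r) frob (x s) ^+ 2) * (\sum_(s <- r) frob (y s) ^+ 2).
Proof.
under [X in _ <= X * _]eq_bigr do rewrite sqr_frob_row.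
under [X in _ <= _ * X]eq_bigr do rewrite sqr_frob_row.
rewrite sqr_frob [X in _ <= X * _]exchange_big mulr_suml; apply: ler_sum => i _.
rewrite [X in _ <= _ * X]exchange_big mulr_sumr; apply: ler_sum => j _.
rewrite summxE.
under [X in X ^+ 2 <= _]eq_bigr do rewrite mxE big_ord1 mxE.
exact: cauchy_schwarz_sum.
Qed.

Lemma frob_sub_le_sum p q (F : nat -> 'M[R]_(p, q)) a b : (a <= b)%N ->
  frob (F a - F b) <= \sum_(a <= k < b) frob (F k.+1 - F k).
Proof.
move=> /subnKC <-; elim: (b - a)%N => [|k IH].
  by rewrite addn0 subrr big_geq // frob0.
rewrite addnS big_nat_recr ?leq_addr //=.
rewrite -[F a - _](subrKA (F (a + k)%N)).
apply: le_trans (frobD _ _) _; rewrite lerD //.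
by rewrite -frobN opprB.
Qed.

End Frobenius.

Section RegularizedGram.
Variables (R : realType) (d : nat) (I : Type) (r : seq I) (Z : I -> 'rV[R]_d).
Variable lambda : R.
Hypothesis lambda_gt0 : 0 < lambda.

Local Notation G := (\sum_(s <- r) (Z s)^T *m Z s).
Local Notation V := (G + lambda%:M).
Local Notation W := (invmx V).

Lemma gram_form_ge0 (y : 'rV[R]_d) : 0 <= (y *m G *m y^T) 0 0.
Proof.
rewrite mulmx_sumr mulmx_suml summxE; apply: sumr_ge0 => s _.
have -> : y *m ((Z s)^T *m Z s) *m y^T = (y *m (Z s)^T) *m (y *m (Z s)^T)^T.
  by rewrite trmx_mul trmxK !mulmxA.
by rewrite mulmx_trmx_row sqr_ge0.
Qed.

Lemma reg_gram_form_ge (y : 'rV[R]_d) : lambda * frob y ^+ 2 <= (y *m V *m y^T) 0 0.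
Proof.
rewrite mulmxDr mulmxDl mxE mul_mx_scalar -scalemxAl [X in _ + X]mxE.
by rewrite mulmx_trmx_row lerDr gram_form_ge0.
Qed.

Lemma trmx_reg_gram : V^T = V.
Proof.
rewrite linearD /= tr_scalar_mx raddf_sum; congr (_ + _).
by apply: eq_bigr => s _ /=; rewrite trmx_mul trmxK.
Qed.

Lemma reg_gram_unit : V \in unitmx.
Proof.
rewrite -row_free_unit -kermx_eq0; apply/eqP/row_matrixP => i; rewrite row0.
set y := row i (kermx V).
have yV0 : y *m V = 0 by rewrite /y -row_mul mulmx_ker row0.
have := reg_gram_form_ge y; rewrite yV0 mul0mx mxE (pmulr_rle0 _ lambda_gt0).
by move=> y_le0; apply/eqP; rewrite -frob_eq0 -sqrf_eq0 eq_le y_le0 sqr_ge0.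
Qed.

Lemma trmx_inv_reg_gram : W^T = W.
Proof. by rewrite trmx_inv trmx_reg_gram. Qed.

Lemma inv_reg_gram_form_ge (x : 'rV[R]_d) :
  lambda * frob (x *m W) ^+ 2 <= (x *m W *m x^T) 0 0.
Proof.
have {3}-> : x = x *m W *m V by rewrite -mulmxA mulVmx ?mulmx1 ?reg_gram_unit.
by rewrite trmx_mul trmx_reg_gram mulmxA reg_gram_form_ge.
Qed.

Lemma mxtrace_inv_reg_gram_ge0 : 0 <= \tr W.
Proof.
apply: sumr_ge0 => i _.
have -> : W i i = ((delta_mx 0 i : 'rV_d) *m W *m (delta_mx 0 i : 'rV_d)^T) 0 0.
  by rewrite trmx_delta -rowE -colE !mxE.
apply: le_trans (inv_reg_gram_form_ge _).
by rewrite mulr_ge0 ?sqr_ge0 ?ltW.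
Qed.

Lemma sum_form_inv_reg_gram :
  \sum_(s <- r) (Z s *m W *m (Z s)^T) 0 0 = d%:R - lambda * \tr W.
Proof.
transitivity (\tr (G *m W)); last first.
  have : \tr (V *m W) = d%:R by rewrite mulmxV ?reg_gram_unit // mxtrace1.
  by rewrite mulmxDl raddfD /= mul_scalar_mx mxtraceZ => <-; rewrite addrK.
rewrite mulmx_suml raddf_sum; apply: eq_bigr => s _; symmetry.
by rewrite /= -mulmxA mxtrace_mulC /mxtrace big_ord1.
Qed.

Lemma sum_sqr_frob_mul_inv_reg_gram :
  \sum_(s <- r) frob (Z s *m W) ^+ 2 <= d%:R / lambda.
Proof.
rewrite ler_pdivlMr // mulrC mulr_sumr.
apply: le_trans (ler_sum _ (fun s _ => inv_reg_gram_form_ge (Z s))) _.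
by rewrite sum_form_inv_reg_gram gerBl mulr_ge0 ?mxtrace_inv_reg_gram_ge0 ?ltW.
Qed.

Lemma frob_inv_reg_gram_mul_sum q (D : I -> 'M[R]_(d, q)) :
  frob (W *m \sum_(s <- r) (Z s)^T *m Z s *m D s) ^+ 2 <=
  d%:R / lambda * \sum_(s <- r) frob (Z s *m D s) ^+ 2.
Proof.
have -> : W *m \sum_(s <- r) (Z s)^T *m Z s *m D s
          = \sum_(s <- r) (Z s *m W)^T *m (Z s *m D s).
  rewrite mulmx_sumr; apply: eq_bigr => s _.
  by rewrite trmx_mul trmx_inv_reg_gram !mulmxA.
apply: le_trans (frob_sum_trmx_mul _ _ _) _.
apply: ler_wpM2r; last exact: sum_sqr_frob_mul_inv_reg_gram.
by apply: sumr_ge0 => s _; exact: sqr_ge0.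
Qed.

End RegularizedGram.

Theorem lemma6 (R : realType) (n m H L h0 h : nat) (lambda gamma BH : R)
  (Z : nat -> 'rV[R]_(n + m)) (Theta : nat -> 'M[R]_(n + m, n)) :
  0 < lambda -> 0 <= gamma ->
  (forall s : nat, (1 <= s <= H)%N -> frob (Z s) <= 1 + gamma) ->
  \sum_(1 <= s < H) frob (Theta s.+1 - Theta s) <= BH ->
  (1 <= h0)%N -> (h0 <= h)%N -> (h <= H)%N -> (h - h0 <= L)%N ->
  frob (invmx (\sum_(h0 <= s < h) ((Z s)^T *m Z s) + lambda%:M)
          *m (\sum_(h0 <= s < h) ((Z s)^T *m Z s *m (Theta s - Theta h))))
    <= (1 + gamma) * Num.sqrt (L%:R * (m + n)%:R / lambda) * BH.
Proof.
move=> lambda_gt0 gamma_ge0 Z_le variation_le h0_ge1 _ h_le_H epoch_le.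
have BH_ge0 : 0 <= BH.
  by apply: le_trans variation_le; apply: sumr_ge0 => k _; exact: frob_ge0.
have drift_le s : (h0 <= s <= h)%N -> frob (Theta s - Theta h) <= BH.
  case/andP=> h0_le_s s_le_h; apply: le_trans (frob_sub_le_sum Theta s_le_h) _.
  apply: le_trans variation_le; apply: ler_sum_nat_subinterval => //.
  - by move=> k; exact: frob_ge0.
  - exact: leq_trans h0_le_s.
have term_le s : (h0 <= s < h)%N ->
    frob (Z s *m (Theta s - Theta h)) ^+ 2 <= ((1 + gamma) * BH) ^+ 2.
  case/andP=> h0_le_s s_lt_h.
  rewrite lerXn2r ?nnegrE ?frob_ge0 ?mulr_ge0 ?addr_ge0 //.
  apply: le_trans (frobM _ _) _; apply: ler_pM; rewrite ?frob_ge0 //.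
    by apply: Z_le; rewrite (leq_trans h0_ge1 h0_le_s) (leq_trans (ltnW s_lt_h)).
  by apply: drift_le; rewrite h0_le_s ltnW.
have sum_le : \sum_(h0 <= s < h) frob (Z s *m (Theta s - Theta h)) ^+ 2
              <= L%:R * ((1 + gamma) * BH) ^+ 2.
  apply: le_trans (ler_sum_nat term_le) _.
  rewrite sumr_const_nat -[_ *+ _]mulr_natl.
  by apply: ler_wpM2r; rewrite ?sqr_ge0 ?ler_nat.
apply: frob_le_of_sqr_le; first by rewrite !mulr_ge0 ?sqrtr_ge0 ?addr_ge0.
apply: le_trans (frob_inv_reg_gram_mul_sum _ _ lambda_gt0 _) _.
apply: le_trans (ler_wpM2l _ sum_le) _; first by rewrite divr_ge0 ?ler0n ?ltW.
rewrite (addnC m n) !exprMn sqr_sqrtr; first lra.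
by rewrite divr_ge0 ?mulr_ge0 ?ler0n ?ltW.
Qed.
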